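(* Let $q\ge5$ and let $\mathcal O$ be any $G_q$-orbit of $E_{n\Gamma}$-lines. Then $\Pi_\Gamma=\Lambda_\Gamma=P_{\mathcal C}=L_{\mathcal C}=0$. Moreover $P_T=\Pi_{2_{\mathcal C}}$ if $q\not\equiv0\pmod3$, and $P_{TO}=\Pi_{2_{\mathcal C}}$ if $q\equiv0\pmod3$.
   Context: Let $\mathbb F_q$ be the field of order $q$ and $\mathrm{PG}(3,q)$ the projective space with points $\mathbf P(x_0,x_1,x_2,x_3)$. For $t\in\mathbb F_q$ put $P(t)=\mathbf P(t^3,t^2,t,1)$, and $P(\infty)=\mathbf P(1,0,0,0)$; the twisted cubic is $\mathcal C=\{P(t):t\in\mathbb F_q\cup\{\infty\}\}$ and $G_q$ is the group of projectivities fixing $\mathcal C$. The osculating plane at $P(t)$ is $x_0-3tx_1+3t^2x_2-t^3x_3=0$ ($t\in\mathbb F_q$) and $x_3=0$ at $P(\infty)$; these are the $\Gamma$-planes. The tangent at $P(t)$, $t\in\mathbb F_q$, is the line through $P(t)$ and $\mathbf P(3t^2,2t,1,0)$; at $P(\infty)$ it is the line through $\mathbf P(1,0,0,0),\mathbf P(0,1,0,0)$. A real chord joins two distinct points of $\mathcal C$; an imaginary chord joins $P(\tau),P(\tau^q)$, $\tau\in\mathbb F_{q^2}\setminus\mathbb F_q$; chords are real chords, tangents and imaginary chords. An axis is the intersection of two distinct osculating planes at points of $\mathcal C$, or of the osculating planes at conjugate points $P(\tau),P(\tau^q)$, $\tau\in\mathbb F_{q^2}\setminus\mathbb F_q$.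 An $E_{n\Gamma}$-line is a line with no point of $\mathcal C$, not contained in a $\Gamma$-plane, which is neither a chord nor an axis. A $2_{\mathcal C}$-plane is a plane containing exactly two points of $\mathcal C$. $\mathcal C$-points are points of $\mathcal C$; for $q\not\equiv0\pmod3$, $T$-points are points off $\mathcal C$ on a tangent; for $q\equiv0\pmod3$, $TO$-points are points off $\mathcal C$ on a tangent and in exactly one $\Gamma$-plane. For a $G_q$-orbit $\mathcal O$ of lines and a plane type $\pi$ / point type $\mathfrak p$: $\Pi_\pi$ = number of $\pi$-planes through a line of $\mathcal O$, $\Lambda_\pi$ = number of lines of $\mathcal O$ in a $\pi$-plane, $P_{\mathfrak p}$ = number of $\mathfrak p$-points on a line of $\mathcal O$, $L_{\mathfrak p}$ = number of lines of $\mathcal O$ through a $\mathfrak p$-point (independent of the choices). *)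

(* PG(3,q) over a finite field F (q = #|F|); subspaces of F^4
   are represented canonically by square matrices A with <<A>>%MS = A. *)
From HB Require Import structures.
From mathcomp Require Import all_boot all_order all_algebra.
Set Implicit Arguments. Unset Strict Implicit. Unset Printing Implicit Defensive.
Import GRing.Theory.
Local Open Scope ring_scope.

Definition mkv (R : nzRingType) (a b c d : R) : 'rV[R]_4 :=
  \row_(i < 4) nth 0 [:: a; b; c; d] i.

Section PG3.
Variable F : finFieldType.

Definition subsp (k : nat) : {set 'M[F]_4} :=
  [set A : 'M[F]_4 | (\rank A == k) && (<<A>>%MS == A)].
Definition pts := subsp 1.
Definition lines := subsp 2.
Definition planes := subsp 3.

(* parameters in F ∪ {∞}; None = ∞ *)
Definition Pt (u : option F) : 'rV[F]_4 :=
  if u is Some t then mkv (t ^+ 3) (t ^+ 2) t 1 else mkv 1 0 0 0.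

Definition Cpts : {set 'M[F]_4} := [set <<Pt u>>%MS | u : option F].

Definition oscv (u : option F) : 'rV[F]_4 :=
  if u is Some t then mkv 1 (- (3%:R * t)) (3%:R * t ^+ 2) (- t ^+ 3)
  else mkv 0 0 0 1.
Definition osc (u : option F) : 'M[F]_4 := kermx (oscv u)^T.

Definition Gplane (pi : 'M[F]_4) : bool := [exists u, (pi == osc u)%MS].

Definition tanv (u : option F) : 'rV[F]_4 :=
  if u is Some t then mkv (3%:R * t ^+ 2) (2%:R * t) 1 0 else mkv 0 1 0 0.

Definition real_chord (l : 'M[F]_4) : bool :=
  [exists u, exists v, (u != v) && (l == Pt u + Pt v)%MS].
Definition tangent_line (l : 'M[F]_4) : bool :=
  [exists u, (l == Pt u + tanv u)%MS].
Definition real_axis (l : 'M[F]_4) : bool :=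
  [exists u, exists v, ~~ (osc u == osc v)%MS && (l == osc u :&: osc v)%MS].

(* Objects over F_{q^2}: L is a field of order q^2 with an embedding iota *)
Section Ext.
Variables (L : finFieldType) (iota : {rmorphism F -> L}).

Definition PtL (tau : L) : 'rV[L]_4 := mkv (tau ^+ 3) (tau ^+ 2) tau 1.
Definition oscvL (tau : L) : 'rV[L]_4 :=
  mkv 1 (- (3%:R * tau)) (3%:R * tau ^+ 2) (- tau ^+ 3).
Definition notinFq (tau : L) : bool := ~~ [exists a : F, iota a == tau].
Definition frobq (tau : L) : L := tau ^+ #|F|.

Definition imag_chord (l : 'M[F]_4) : bool :=
  [exists tau : L, notinFq tau &&
     (map_mx iota l == PtL tau + PtL (frobq tau))%MS].
Definition imag_axis (l : 'M[F]_4) : bool :=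
  [exists tau : L, notinFq tau &&
     (map_mx iota l == kermx (oscvL tau)^T :&: kermx (oscvL (frobq tau))^T)%MS].
End Ext.

Variables (L : finFieldType) (iota : {rmorphism F -> L}).

Definition chord (l : 'M[F]_4) : bool :=
  [|| real_chord l, tangent_line l | imag_chord iota l].
Definition axis (l : 'M[F]_4) : bool := real_axis l || imag_axis iota l.

Definition EnG_line (l : 'M[F]_4) : bool :=
  [&& l \in lines,
      [forall P in Cpts, ~~ (P <= l)%MS],
      [forall pi in planes, Gplane pi ==> ~~ (l <= pi)%MS],
      ~~ chord l & ~~ axis l].

Definition two_C_plane (pi : 'M[F]_4) : bool :=
  (pi \in planes) && (#|[set P in Cpts | (P <= pi)%MS]| == 2).

Definition on_tangent (P : 'M[F]_4) : bool := [exists u, (P <= Pt u + tanv u)%MS].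
Definition T_point (P : 'M[F]_4) : bool :=
  [&& P \in pts, P \notin Cpts & on_tangent P].
Definition TO_point (P : 'M[F]_4) : bool :=
  [&& P \in pts, P \notin Cpts, on_tangent P &
      #|[set pi in planes | Gplane pi && (P <= pi)%MS]| == 1].

Definition Gq : {set 'M[F]_4} :=
  [set M : 'M[F]_4 | (M \in unitmx) && ([set <<P *m M>>%MS | P in Cpts] == Cpts)].

Definition orbit_line (l : 'M[F]_4) : {set 'M[F]_4} :=
  [set <<l *m M>>%MS | M in Gq].

Definition Pi_Gamma (m : 'M[F]_4) : nat :=
  #|[set pi in planes | Gplane pi && (m <= pi)%MS]|.
Definition Lambda_Gamma (O : {set 'M[F]_4}) (pi : 'M[F]_4) : nat :=
  #|[set m in O | (m <= pi)%MS]|.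
Definition P_C (m : 'M[F]_4) : nat := #|[set P in Cpts | (P <= m)%MS]|.
Definition L_C (O : {set 'M[F]_4}) (P : 'M[F]_4) : nat := #|[set m in O | (P <= m)%MS]|.
Definition Pi_2C (m : 'M[F]_4) : nat := #|[set pi | two_C_plane pi && (m <= pi)%MS]|.
Definition P_T (m : 'M[F]_4) : nat := #|[set P | T_point P && (P <= m)%MS]|.
Definition P_TO (m : 'M[F]_4) : nat := #|[set P | TO_point P && (P <= m)%MS]|.

End PG3.

From HB Require Import structures.
From mathcomp Require Import all_boot all_algebra all_field.
From mathcomp Require Import ring zify.
Set Implicit Arguments. Unset Strict Implicit. Unset Printing Implicit Defensive.
Import GRing.Theory.
Local Open Scope ring_scope.

(* Elements of G_q map C onto itself and, through a normal form for those fixing P(oo) and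
   P(0) (this is where q >= 5 is used), osculating planes onto osculating planes.  Hence every
   line of the orbit of an E_nG-line misses C and lies in no Gamma-plane, which gives the four
   vanishing counts.
   For such a line m, the T-points on m and the 2_C-planes through m both correspond to the
   tangents meeting m: such a tangent meets m in one point and spans with m a plane which, not
   being osculating, meets C in exactly one further point (the binary cubic cut out on C has a
   double but no triple root); conversely a plane meeting C in exactly two points contains the
   tangent at one of them.  Distinct tangents are skew, so both correspondences are injective.
   In characteristic 3 every osculating plane contains all tangent directions and every point
   lies in some osculating plane; so no tangent direction lies on m, and a T-point of m lies
   only in the osculating plane at its point of contact: its TO-points are its T-points. *)

Local Notation i0 := (@Ordinal 4 0 isT).
Local Notation i1 := (@Ordinal 4 1 isT).
Local Notation i2 := (@Ordinal 4 2 isT).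
Local Notation i3 := (@Ordinal 4 3 isT).

Section Coordinates.
Variable R : nzRingType.
Implicit Types a b c d k : R.

Definition mkc a b c d : 'cV[R]_4 := (mkv a b c d)^T.

Definition vdot (x : 'rV[R]_4) (w : 'cV[R]_4) : R := (x *m w) 0 0.

Lemma ord4P (P : 'I_4 -> Prop) : P i0 -> P i1 -> P i2 -> P i3 -> forall i, P i.
Proof.
by move=> P0 P1 P2 P3 [[|[|[|[|i]]]] Hi] //; rewrite (bool_irrelevance Hi isT).
Qed.

Lemma sum4 (f : 'I_4 -> R) : \sum_(j < 4) f j = f i0 + f i1 + f i2 + f i3.
Proof.
rewrite !big_ord_recl big_ord0 addr0 !addrA.
by congr (_ + _ + _ + _); congr f; apply: val_inj.
Qed.

Lemma mkv_inj a b c d a' b' c' d' :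
  mkv a b c d = mkv a' b' c' d' -> [/\ a = a', b = b', c = c' & d = d'].
Proof.
move=> E; have e i : mkv a b c d 0 i = mkv a' b' c' d' 0 i by rewrite E.
by move: (e i0) (e i1) (e i2) (e i3); rewrite !mxE.
Qed.

Lemma mkv0 : mkv 0 0 0 0 = 0 :> 'rV[R]_4.
Proof. by apply/rowP; apply: ord4P; rewrite !mxE. Qed.

Lemma mkc0 : mkc 0 0 0 0 = 0.
Proof. by rewrite /mkc mkv0 trmx0. Qed.

Lemma mkv_eq0 a b c d : (mkv a b c d == 0) = [&& a == 0, b == 0, c == 0 & d == 0].
Proof.
apply/eqP/and4P => [|[/eqP-> /eqP-> /eqP-> /eqP->]]; last exact: mkv0.
by rewrite -mkv0 => /mkv_inj[-> -> -> ->].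
Qed.

Lemma mkc_eq0 a b c d : (mkc a b c d == 0) = [&& a == 0, b == 0, c == 0 & d == 0].
Proof. by rewrite /mkc -mkv_eq0 -(inj_eq (@trmx_inj _ _ _)) trmx0 trmxK. Qed.

Lemma rV4E (x : 'rV[R]_4) : x = mkv (x 0 i0) (x 0 i1) (x 0 i2) (x 0 i3).
Proof. by apply/rowP; apply: ord4P; rewrite !mxE. Qed.

Lemma cV4E (w : 'cV[R]_4) : w = mkc (w i0 0) (w i1 0) (w i2 0) (w i3 0).
Proof. by apply/colP; apply: ord4P; rewrite !mxE. Qed.

Lemma cV4_rect (P : 'cV[R]_4 -> Prop) :
  (forall a b c d, P (mkc a b c d)) -> forall w, P w.
Proof. by move=> Pmkc w; rewrite [w]cV4E. Qed.

Lemma scale_mkv k a b c d : k *: mkv a b c d = mkv (k * a) (k * b) (k * c) (k * d).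
Proof. by apply/rowP; apply: ord4P; rewrite !mxE. Qed.

Lemma scale_mkc k a b c d : k *: mkc a b c d = mkc (k * a) (k * b) (k * c) (k * d).
Proof. by rewrite /mkc -linearZ /= scale_mkv. Qed.

Lemma mulmx_mkv a b c d (A : 'M[R]_4) : mkv a b c d *m A =
  mkv (a * A i0 i0 + b * A i1 i0 + c * A i2 i0 + d * A i3 i0)
      (a * A i0 i1 + b * A i1 i1 + c * A i2 i1 + d * A i3 i1)
      (a * A i0 i2 + b * A i1 i2 + c * A i2 i2 + d * A i3 i2)
      (a * A i0 i3 + b * A i1 i3 + c * A i2 i3 + d * A i3 i3).
Proof. by apply/rowP; apply: ord4P; rewrite !mxE sum4 !mxE. Qed.

Lemma mulmx_mkc a b c d (A : 'M[R]_4) : A *m mkc a b c d =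
  mkc (A i0 i0 * a + A i0 i1 * b + A i0 i2 * c + A i0 i3 * d)
      (A i1 i0 * a + A i1 i1 * b + A i1 i2 * c + A i1 i3 * d)
      (A i2 i0 * a + A i2 i1 * b + A i2 i2 * c + A i2 i3 * d)
      (A i3 i0 * a + A i3 i1 * b + A i3 i2 * c + A i3 i3 * d).
Proof. by apply/colP; apply: ord4P; rewrite !mxE sum4 !mxE. Qed.

Lemma vdotE a b c d a' b' c' d' :
  vdot (mkv a b c d) (mkc a' b' c' d') = a * a' + b * b' + c * c' + d * d'.
Proof. by rewrite /vdot !mxE sum4 !mxE. Qed.

Lemma vdotDl (x y : 'rV[R]_4) w : vdot (x + y) w = vdot x w + vdot y w.
Proof. by rewrite /vdot mulmxDl mxE. Qed.

Lemma vdotZl k (x : 'rV[R]_4) w : vdot (k *: x) w = k * vdot x w.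
Proof. by rewrite /vdot -scalemxAl mxE. Qed.

Lemma mulmx_rc_eq0 (x : 'rV[R]_4) (w : 'cV[R]_4) : (x *m w == 0) = (vdot x w == 0).
Proof.
rewrite /vdot; apply/eqP/eqP => [->|E]; first by rewrite mxE.
by apply/matrixP => i j; rewrite !ord1 E mxE.
Qed.

End Coordinates.

Section Subspaces.
Variable F : fieldType.

Lemma submx_rank_geq m1 m2 n (A : 'M[F]_(m1, n)) (B : 'M[F]_(m2, n)) :
  (A <= B)%MS -> (\rank B <= \rank A)%N -> (B <= A)%MS.
Proof. by move=> sAB le_BA; rewrite -(mxrank_leqif_sup sAB).2 eqn_leq le_BA mxrankS. Qed.

Lemma mxrank_adds_rV n (x y : 'rV[F]_n) :
  x != 0 -> ~~ (y <= x)%MS -> \rank (x + y)%MS = 2%N.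
Proof.
move=> nz_x y_x; have := mxrank_sum_cap x y.
have -> : \rank (x :&: y)%MS = 0%N.
  apply/eqP; apply: contraR y_x; rewrite -lt0n => cap_gt0.
  apply: submx_trans (capmxSl x y); apply: submx_rank_geq (capmxSr x y) _.
  exact: leq_trans (rank_leq_row y) cap_gt0.
have nz_y : y != 0 by apply: contraNneq y_x => ->; exact: sub0mx.
by rewrite !rank_rV nz_x nz_y addn0.
Qed.

Lemma hyperplane_kermx n (A : 'M[F]_n.+1) : \rank A = n ->
  exists2 w : 'cV[F]_n.+1, w != 0 & (A == kermx w)%MS.
Proof.
move=> rkA; pose r := nz_row (kermx A^T).
have nz_r : r != 0.
  by rewrite nz_row_eq0 -mxrank_eq0 mxrank_ker mxrank_tr rkA subSnn.
have rA0 : r *m A^T = 0 by apply/eqP; rewrite -sub_kermx nz_row_sub.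
have nz_rT : r^T != 0 by rewrite -(inj_eq (@trmx_inj _ _ _)) trmxK trmx0.
exists r^T => //.
have sA : (A <= kermx r^T)%MS by rewrite sub_kermx -[A]trmxK -trmx_mul rA0 trmx0.
by rewrite -(mxrank_leqif_eq sA) mxrank_ker mxrank_tr rank_rV nz_r rkA subn1.
Qed.

End Subspaces.

Section TwistedCubic.
Variable F : finFieldType.
Implicit Types (s t : F) (u v a b : option F).

Lemma subsp_rank k (A : 'M[F]_4) : A \in subsp F k -> \rank A = k.
Proof. by rewrite inE => /andP[/eqP]. Qed.

Lemma subsp_eq_genmx k (A : 'M[F]_4) m (B : 'M[F]_(m, 4)) :
  A \in subsp F k -> (A == B)%MS -> A = <<B>>%MS.
Proof. by rewrite inE => /andP[_ /eqP genA] /genmxP <-. Qed.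

Lemma genmx_subsp k m (B : 'M[F]_(m, 4)) : \rank B = k -> <<B>>%MS \in subsp F k.
Proof. by move=> rkB; rewrite inE mxrank_gen rkB genmx_id !eqxx. Qed.

Lemma genmx_inj_sub m1 m2 (A : 'M[F]_(m1, 4)) (B : 'M[F]_(m2, 4)) :
  <<A>>%MS = <<B>>%MS -> (A <= B)%MS.
Proof. by move=> eqAB; rewrite -genmxE eqAB genmxE. Qed.

Lemma sub_kermx_vdot (x : 'rV[F]_4) w : (x <= kermx w)%MS = (vdot x w == 0).
Proof. by rewrite sub_kermx mulmx_rc_eq0. Qed.

Lemma oscvT u : (oscv u)^T =
  if u is Some t then mkc 1 (- (3%:R * t)) (3%:R * t ^+ 2) (- t ^+ 3) else mkc 0 0 0 1.
Proof. by case: u. Qed.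

Lemma vdot_PtS t w0 w1 w2 w3 :
  vdot (Pt (Some t)) (mkc w0 w1 w2 w3) = t ^+ 3 * w0 + t ^+ 2 * w1 + t * w2 + w3.
Proof. by rewrite vdotE mul1r. Qed.
Lemma vdot_PtN w0 w1 w2 w3 : vdot (Pt (@None F)) (mkc w0 w1 w2 w3) = w0.
Proof. by rewrite vdotE; ring. Qed.
Lemma vdot_tanvS t w0 w1 w2 w3 :
  vdot (tanv (Some t)) (mkc w0 w1 w2 w3) = 3%:R * t ^+ 2 * w0 + 2%:R * t * w1 + w2.
Proof. by rewrite vdotE; ring. Qed.
Lemma vdot_tanvN w0 w1 w2 w3 : vdot (tanv (@None F)) (mkc w0 w1 w2 w3) = w1.
Proof. by rewrite vdotE; ring. Qed.

Definition vdot_cubicE := (vdot_PtS, vdot_PtN, vdot_tanvS, vdot_tanvN).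

Lemma Pt_neq0 u : Pt u != 0.
Proof. by case: u => [t|]; rewrite mkv_eq0 oner_eq0 ?andbF ?andFb. Qed.

Lemma tanv_neq0 u : tanv u != 0.
Proof. by case: u => [t|]; rewrite mkv_eq0 oner_eq0 ?andbF ?andFb. Qed.

Lemma oscv_neq0 u : oscv u != 0.
Proof. by case: u => [t|]; rewrite mkv_eq0 oner_eq0 ?andbF. Qed.

Lemma oscvT_neq0 u : (oscv u)^T != 0 :> 'cV[F]_4.
Proof. by rewrite -(inj_eq (@trmx_inj _ _ _)) trmxK trmx0 oscv_neq0. Qed.

Lemma rank_osc u : \rank (osc u) = 3%N.
Proof. by rewrite mxrank_ker mxrank_tr rank_rV oscv_neq0. Qed.

Lemma Pt_inj u v : (Pt u <= Pt v)%MS -> u = v.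
Proof.
case/sub_rVP => k; case: u => [s|]; case: v => [t|] //;
  rewrite scale_mkv => /mkv_inj[h0 h1 h2 h3].
- by move: h2 h3; rewrite mulr1 => -> <-; rewrite mul1r.
- by move/eqP: h3; rewrite mulr0 oner_eq0.
- by move: h3; rewrite mulr1 => k0; move/eqP: h0; rewrite -k0 mul0r oner_eq0.
Qed.

Lemma tanv_notin_Pt u : ~~ (tanv u <= Pt u)%MS.
Proof.
apply/sub_rVP => -[k]; case: u => [s|]; rewrite scale_mkv => /mkv_inj[h0 h1 h2 h3].
- by move: h3; rewrite mulr1 => k0; move/eqP: h2; rewrite -k0 mul0r oner_eq0.
- by move/eqP: h1; rewrite mulr0 oner_eq0.
Qed.

Definition tline u : 'M[F]_4 := (Pt u + tanv u)%MS.

Lemma rank_tline u : \rank (tline u) = 2%N.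
Proof. exact: mxrank_adds_rV (Pt_neq0 u) (tanv_notin_Pt u). Qed.

Lemma tline_sub_kermx u w :
  (tline u <= kermx w)%MS = (vdot (Pt u) w == 0) && (vdot (tanv u) w == 0).
Proof. by rewrite addsmx_sub !sub_kermx_vdot. Qed.

Lemma sub_tlineP u (x : 'rV[F]_4) :
  (x <= tline u)%MS -> exists al be, x = al *: Pt u + be *: tanv u.
Proof.
case/sub_addsmxP => -[D1 D2] /= ->; exists (D1 0 0), (D2 0 0).
by rewrite {1}[D1]mx11_scalar {1}[D2]mx11_scalar !mul_scalar_mx.
Qed.

Lemma tline_sub_osc u : (tline u <= osc u)%MS.
Proof.
by rewrite tline_sub_kermx oscvT; case: u => [t|]; rewrite !vdot_cubicE; apply/andP;
  split; apply/eqP; ring.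
Qed.

(* Together with [oscv u], cuts out the tangent line at [P(u)]. *)
Definition tplanev u : 'cV[F]_4 :=
  if u is Some t then mkc 0 1 (- (2%:R * t)) (t ^+ 2) else mkc 0 0 1 0.

Lemma tline_sub_tplane u : (tline u <= kermx (tplanev u))%MS.
Proof.
by rewrite tline_sub_kermx; case: u => [t|]; rewrite !vdot_cubicE; apply/andP;
  split; apply/eqP; ring.
Qed.

Lemma tline_skew_rV a b (x : 'rV[F]_4) : a != b ->
  (x <= tline a)%MS -> (x <= tline b)%MS -> x = 0.
Proof.
move=> ab /sub_tlineP[al [be ->]] xb.
have h1 := submx_trans xb (tline_sub_tplane b).
have h2 := submx_trans xb (tline_sub_osc b).
move: h1 h2 {xb}; rewrite /osc oscvT !sub_kermx_vdot !vdotDl !vdotZl.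
case: a b ab => [s|] [t|] //= ab; rewrite !vdot_cubicE => /eqP h1 /eqP h2.
- have st : s - t != 0 by rewrite subr_eq0; apply: contraNneq ab => ->.
  have K1 : (s - t) * (al * (s - t) + 2%:R * be) = 0 by rewrite -h1; ring.
  have K2 : (s - t) ^+ 2 * (al * (s - t) + 3%:R * be) = 0 by rewrite -h2; ring.
  move/eqP: K1; rewrite mulf_eq0 (negPf st) => /eqP K1.
  move/eqP: K2; rewrite mulf_eq0 expf_eq0 (negPf st) andbF => /eqP K2.
  have eb : be = 0.
    rewrite (_ : be = al * (s - t) + 3%:R * be - (al * (s - t) + 2%:R * be)); last by ring.
    by rewrite K1 K2 subrr.
  have ea : al * (s - t) = 0 by rewrite -K1 eb; ring.
  move/eqP: ea; rewrite mulf_eq0 (negPf st) orbF => /eqP ea.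
  by rewrite ea eb !scale0r addr0.
- have ea : al = 0 by rewrite -h2; ring.
  have eb : be = 0 by rewrite -h1 ea; ring.
  by rewrite ea eb !scale0r addr0.
- have eb : be = 0 by rewrite -h1; ring.
  have ea : al = 0 by rewrite -h2 eb; ring.
  by rewrite ea eb !scale0r addr0.
Qed.

Lemma tline_skew a b m (X : 'M[F]_(m, 4)) : a != b ->
  (X <= tline a)%MS -> (X <= tline b)%MS -> X = 0.
Proof.
move=> ab Xa Xb; apply/row_matrixP => i; rewrite row0.
by apply: (tline_skew_rV ab); apply: submx_trans (row_sub i X) _.
Qed.

Lemma rank_tline_adds a b : a != b -> \rank (tline a + tline b)%MS = 4%N.
Proof.
move=> ab; have := mxrank_sum_cap (tline a) (tline b).
by rewrite (tline_skew ab (capmxSl _ _) (capmxSr _ _)) mxrank0 !rank_tline addn0.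
Qed.

End TwistedCubic.

Lemma eq0_lincomb2 (R : nzRingType) (p q1 q2 a1 a2 : R) :
  p = a1 * q1 + a2 * q2 -> q1 = 0 -> q2 = 0 -> p = 0.
Proof. by move=> -> -> ->; rewrite !mulr0 addr0. Qed.

Section BinaryCubic.
Variable F : finFieldType.
Variables w0 w1 w2 w3 : F.
Implicit Types (s t x : F) (u v a b : option F).

Local Notation w := (mkc w0 w1 w2 w3).
Local Notation cub x := (x ^+ 3 * w0 + x ^+ 2 * w1 + x * w2 + w3).
Local Notation dcub x := (3%:R * x ^+ 2 * w0 + 2%:R * x * w1 + w2).

Lemma cubic_two_roots_double s t : s != t -> w0 != 0 ->
  (forall x, cub x = 0 -> x = s \/ x = t) -> cub s = 0 -> cub t = 0 ->
  dcub s = 0 \/ dcub t = 0.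
Proof.
move=> st nz_w0 roots Cs Ct.
(* [e] is the third root: the roots of [cub] add up to [- w1 / w0]. *)
pose e := - (w1 / w0) - s - t.
have hw1 : w1 = - w0 * (s + t + e) by rewrite /e; field.
have Gs : (w2 - w0 * (s * t + s * e + t * e)) * s + (w3 + w0 * s * t * e) = 0.
  by rewrite -Cs hw1; ring.
have Gt : (w2 - w0 * (s * t + s * e + t * e)) * t + (w3 + w0 * s * t * e) = 0.
  by rewrite -Ct hw1; ring.
have A0 : w2 - w0 * (s * t + s * e + t * e) = 0.
  apply: (mulfI (_ : s - t != 0)); first by rewrite subr_eq0.
  by rewrite mulr0; apply: (eq0_lincomb2 (a1 := 1) (a2 := -1)) Gs Gt; ring.
have Ce : cub e = 0 by apply: (eq0_lincomb2 (a1 := 1) (a2 := e - s)) Gs A0; rewrite hw1; ring.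
by case: (roots e Ce) => es; [left | right]; rewrite -A0 hw1 es; ring.
Qed.

Lemma quadratic_two_roots_double t : w0 = 0 ->
  (forall x, cub x = 0 -> x = t) -> cub t = 0 -> w1 = 0 \/ dcub t = 0.
Proof.
move=> w00 roots Ct; have [->|nz_w1] := eqVneq w1 0; first by left.
pose e := - (w2 / w1) - t.
have hw2 : w2 = - w1 * (t + e) by rewrite /e; field.
have Ce : cub e = 0 by rewrite -Ct hw2 w00; ring.
by right; rewrite hw2 (roots e Ce) w00; ring.
Qed.

Lemma two_roots_double a b : a != b ->
  (forall u, vdot (Pt u) w = 0 -> u = a \/ u = b) ->
  vdot (Pt a) w = 0 -> vdot (Pt b) w = 0 ->
  vdot (tanv a) w = 0 \/ vdot (tanv b) w = 0.
Proof.
case: a b => [s|] [t|] //= ab roots; rewrite !vdot_cubicE.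
- have nz_w0 : w0 != 0.
    by apply/eqP => w00; have := roots None; rewrite vdot_PtN w00 => /(_ erefl); case.
  have roots' x : cub x = 0 -> x = s \/ x = t.
    by move=> Cx; have := roots (Some x); rewrite vdot_PtS => /(_ Cx) [] [->]; [left | right].
  by apply: (cubic_two_roots_double _ nz_w0 roots'); apply: contraNneq ab => ->.
- have roots' x : cub x = 0 -> x = s.
    by move=> Cx; have := roots (Some x); rewrite vdot_PtS => /(_ Cx) [] // [].
  by move=> Cs w00; case: (quadratic_two_roots_double w00 roots' Cs); [right | left].
- have roots' x : cub x = 0 -> x = t.
    by move=> Cx; have := roots (Some x); rewrite vdot_PtS => /(_ Cx) [] // [].
  by move=> w00 Ct; apply: quadratic_two_roots_double w00 roots' Ct.
Qed.

Lemma double_root_finite s : w != 0 -> cub s = 0 -> dcub s = 0 ->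
  (exists k, w = k *: (oscv (Some s))^T) \/
  (exists e, [/\ e != Some s, vdot (Pt e) w = 0 &
     forall u, vdot (Pt u) w = 0 -> u = Some s \/ u = e]).
Proof.
move=> nz_w Cs DCs.
have cubE x : cub x = (x - s) ^+ 2 * (w0 * (x + 2%:R * s) + w1).
  by apply/eqP; rewrite -subr_eq0; apply/eqP;
    apply: (eq0_lincomb2 (a1 := 1) (a2 := x - s)) Cs DCs; ring.
have [w00|nz_w0] := eqVneq w0 0.
  have nz_w1 : w1 != 0.
    apply: contraNneq nz_w => w10.
    have w20 : w2 = 0 by rewrite -DCs w00 w10; ring.
    have w30 : w3 = 0 by rewrite -Cs w00 w10 w20; ring.
    by rewrite w00 w10 w20 w30 mkc0.
  right; exists None; split => //; first by rewrite vdot_PtN.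
  case=> [t|]; rewrite vdot_cubicE ?cubE ?w00 ?mul0r ?add0r; last by right.
  move/eqP; rewrite mulf_eq0 (negPf nz_w1) orbF expf_eq0 subr_eq0 => /eqP->; by left.
pose e := - (w1 / w0) - 2%:R * s.
have hw1 : w1 = - w0 * (e + 2%:R * s) by rewrite /e; field.
have [es|nes] := eqVneq e s.
  left; exists w0; rewrite oscvT scale_mkc.
  have hw2 : w2 = w0 * (3%:R * s ^+ 2) by rewrite -[LHS]subr0 -DCs hw1 es; ring.
  have hw3 : w3 = w0 * - s ^+ 3 by rewrite -[LHS]subr0 -Cs hw2 hw1 es; ring.
  by rewrite hw3 hw2 hw1 es; congr mkc; ring.
right; exists (Some e); split; first exact: nes.
  by rewrite vdot_cubicE cubE hw1; ring.
case=> [t|]; rewrite vdot_cubicE; last by move/eqP; rewrite (negPf nz_w0).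
rewrite cubE hw1 (_ : w0 * (t + 2%:R * s) + - w0 * (e + 2%:R * s) = w0 * (t - e));
  last by ring.
move/eqP; rewrite !mulf_eq0 (negPf nz_w0) /= !subr_eq0 orbb.
by case/orP=> /eqP->; [left | right].
Qed.

Lemma double_root_cases a : w != 0 -> vdot (Pt a) w = 0 -> vdot (tanv a) w = 0 ->
  (exists k, w = k *: (oscv a)^T) \/
  (exists e, [/\ e != a, vdot (Pt e) w = 0 &
     forall u, vdot (Pt u) w = 0 -> u = a \/ u = e]).
Proof.
move=> nz_w; case: a => [s|]; rewrite !vdot_cubicE; first exact: double_root_finite.
move=> w00 w10; have [w20|nz_w2] := eqVneq w2 0.
  by left; exists w3; rewrite oscvT scale_mkc w00 w10 w20; congr mkc; ring.
pose e := - (w3 / w2).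
have hw3 : w3 = - w2 * e by rewrite /e; field.
right; exists (Some e); split => //; first by rewrite vdot_cubicE w00 w10 hw3; ring.
case=> [t|]; rewrite vdot_cubicE; last by left.
rewrite w00 w10 hw3 (_ : t ^+ 3 * 0 + t ^+ 2 * 0 + t * w2 + - w2 * e = w2 * (t - e));
  last by ring.
by move/eqP; rewrite mulf_eq0 (negPf nz_w2) subr_eq0 => /eqP->; right.
Qed.

End BinaryCubic.

Section PlanesAndTangents.
Variable F : finFieldType.
Implicit Types (u v a b e : option F) (pi : 'M[F]_4).

Lemma sub_kermx_scale k m (X : 'M[F]_(m, 4)) (c : 'cV[F]_4) :
  k != 0 -> (X <= kermx (k *: c))%MS = (X <= kermx c)%MS.
Proof. by move=> nz_k; rewrite !sub_kermx -scalemxAr scaler_eq0 (negPf nz_k). Qed.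

Lemma plane_kermx pi : pi \in planes F ->
  exists2 w : 'cV[F]_4, w != 0 & (pi :=: kermx w)%MS.
Proof. by move/subsp_rank/hyperplane_kermx => [w nz_w /eqmxP]; exists w. Qed.

Lemma genPt_inj : injective (fun u => <<Pt u>>%MS : 'M[F]_4).
Proof. by move=> u v /genmx_inj_sub/Pt_inj. Qed.

Lemma card_Cpts_sub pi :
  #|[set P in Cpts F | (P <= pi)%MS]| = #|[set u | (Pt u <= pi)%MS]|.
Proof.
rewrite -(card_imset _ genPt_inj); congr #|pred_of_set _|; apply/setP => P.
rewrite !inE; apply/andP/imsetP => [[/imsetP[u _ ->]]|[u]].
  by rewrite genmxE => Pu; exists u; rewrite ?inE.
by rewrite inE => Pu ->; rewrite genmxE Pu imset_f.
Qed.

Lemma plane_two_points_tline a b (w : 'cV[F]_4) : a != b ->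
  (forall u, (Pt u <= kermx w)%MS = (u == a) || (u == b)) ->
  (tline a <= kermx w)%MS || (tline b <= kermx w)%MS.
Proof.
move: w; apply: cV4_rect => w0 w1 w2 w3 ab Cw.
have roots u : vdot (Pt u) (mkc w0 w1 w2 w3) = 0 -> u = a \/ u = b.
  by move/eqP; rewrite -sub_kermx_vdot Cw => /orP[]/eqP; [left | right].
have Ca : vdot (Pt a) (mkc w0 w1 w2 w3) = 0.
  by apply/eqP; rewrite -sub_kermx_vdot Cw eqxx.
have Cb : vdot (Pt b) (mkc w0 w1 w2 w3) = 0.
  by apply/eqP; rewrite -sub_kermx_vdot Cw eqxx orbT.
rewrite !tline_sub_kermx Ca Cb eqxx /=.
by case: (two_roots_double ab roots Ca Cb) => ->; rewrite eqxx ?orbT.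
Qed.

Lemma plane_through_tline a (w : 'cV[F]_4) : w != 0 -> (tline a <= kermx w)%MS ->
  (kermx w == osc a)%MS \/
  exists2 e, e != a & forall u, (Pt u <= kermx w)%MS = (u == a) || (u == e).
Proof.
move: w; apply: cV4_rect => w0 w1 w2 w3 nz_w.
rewrite tline_sub_kermx => /andP[/eqP Ca /eqP Ta].
case: (double_root_cases nz_w Ca Ta) => [[k Ek]|[e [ea Ce roots]]].
  have nz_k : k != 0 by apply: contraNneq nz_w => k0; rewrite Ek k0 scale0r.
  left; rewrite Ek /osc; apply/andP.
  by rewrite sub_kermx_scale // -{1}(sub_kermx_scale _ _ nz_k).
right; exists e => // u; rewrite sub_kermx_vdot.
apply/idP/orP => [/eqP/roots[]->|[]/eqP->]; rewrite ?eqxx ?Ca ?Ce; by [left | right |].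
Qed.

Lemma two_C_planeE pi :
  two_C_plane pi = (pi \in planes F) && (#|[set u | (Pt u <= pi)%MS]| == 2).
Proof. by rewrite /two_C_plane card_Cpts_sub. Qed.

Lemma two_C_plane_tline pi : two_C_plane pi -> exists a, (tline a <= pi)%MS.
Proof.
rewrite two_C_planeE => /andP[pi_plane /cards2P[a [b [ab Cpi]]]].
have [w nz_w pi_w] := plane_kermx pi_plane.
have Cw u : (Pt u <= kermx w)%MS = (u == a) || (u == b).
  by rewrite -pi_w -in_set2 -Cpi inE.
by case/orP: (plane_two_points_tline ab Cw) => Tw; [exists a | exists b]; rewrite pi_w.
Qed.

Lemma tline_plane_two_C pi a : pi \in planes F ->
  (tline a <= pi)%MS -> ~~ (pi <= osc a)%MS -> two_C_plane pi.
Proof.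
move=> pi_plane Tpi pi_nosc; have [w nz_w pi_w] := plane_kermx pi_plane.
rewrite pi_w in Tpi pi_nosc; rewrite two_C_planeE pi_plane.
case: (plane_through_tline nz_w Tpi) => [/andP[w_osc _]|[e ea Cw]].
  by rewrite pi_w w_osc in pi_nosc.
have -> : [set u | (Pt u <= pi)%MS] = [set a; e] by apply/setP => u; rewrite !inE pi_w Cw.
by rewrite cards2 (eq_sym a) ea.
Qed.

End PlanesAndTangents.

Section TangentsMeetingLine.
Variable F : finFieldType.
Variable m : 'M[F]_4.
Hypothesis m_line : m \in lines F.
Hypothesis m_noC : forall u, ~~ (Pt u <= m)%MS.
Hypothesis m_noG : forall u, ~~ (m <= osc u)%MS.
Implicit Types (u a b : option F) (X pi : 'M[F]_4).

Definition tangents_meeting : {set option F} := [set a | \rank (m :&: tline a) == 1%N].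
Definition meet_point a : 'M[F]_4 := <<m :&: tline a>>%MS.
Definition join_plane a : 'M[F]_4 := <<(m + tline a)%MS>>%MS.

Lemma rank_cap_tline_le1 a : (\rank (m :&: tline a) <= 1)%N.
Proof.
rewrite leqNgt; apply/negP => rk_gt1.
have Tm : (tline a <= m)%MS.
  apply: submx_trans (capmxSl m _); apply: submx_rank_geq (capmxSr _ _) _.
  by rewrite rank_tline.
by move: (m_noC a); rewrite (submx_trans (addsmxSl _ _) Tm).
Qed.

Lemma rank_join_tline a : a \in tangents_meeting -> \rank (m + tline a) = 3%N.
Proof.
rewrite inE => /eqP rk_cap; have := mxrank_sum_cap m (tline a).
by rewrite rk_cap (subsp_rank m_line) rank_tline addn1 => -[].
Qed.

Lemma meet_point_inj : {in tangents_meeting &, injective meet_point}.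
Proof.
move=> a b; rewrite inE => /eqP rk_a _ /genmx_inj_sub sub_ab.
have [//|ab] := eqVneq a b.
have := tline_skew ab (capmxSr m (tline a)) (submx_trans sub_ab (capmxSr _ _)).
by move/(congr1 mxrank); rewrite rk_a mxrank0.
Qed.

Lemma join_plane_inj : {in tangents_meeting &, injective join_plane}.
Proof.
move=> a b a_meets _ /esym/genmx_inj_sub sub_ba; have [//|ab] := eqVneq a b.
have : (tline a + tline b <= m + tline a)%MS.
  by rewrite addsmx_sub addsmxSr (submx_trans (addsmxSr m _) sub_ba).
by move/mxrankS; rewrite rank_tline_adds // rank_join_tline.
Qed.

Lemma T_points_on_line :
  [set X | T_point X && (X <= m)%MS] = meet_point @: tangents_meeting.
Proof.
apply/setP => X; rewrite inE; apply/idP/imsetP.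
- case/andP=> /and3P[X_pt _ /existsP[a Xa]] Xm.
  have Xcap : (X <= m :&: tline a)%MS by rewrite sub_capmx Xm.
  have rk_cap : \rank (m :&: tline a) = 1%N.
    apply/eqP; rewrite eqn_leq rank_cap_tline_le1 /=.
    by move: (mxrankS Xcap); rewrite (subsp_rank X_pt).
  exists a; first by rewrite inE rk_cap.
  apply: (subsp_eq_genmx X_pt); apply/andP; split => //.
  by apply: submx_rank_geq Xcap _; rewrite rk_cap (subsp_rank X_pt).
- case=> a; rewrite inE => /eqP rk_cap ->; rewrite /meet_point genmxE capmxSl andbT.
  apply/and3P; split; first exact: genmx_subsp.
    apply/imsetP => -[u _ /esym /genmx_inj_sub Pu_cap].
    by move: (m_noC u); rewrite (submx_trans Pu_cap (capmxSl _ _)).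
  by apply/existsP; exists a; rewrite genmxE capmxSr.
Qed.

Lemma two_C_planes_through_line :
  [set pi | two_C_plane pi && (m <= pi)%MS] = join_plane @: tangents_meeting.
Proof.
apply/setP => pi; rewrite inE; apply/idP/imsetP.
- case/andP=> pi_2C m_pi; have pi_plane : pi \in planes F by case/andP: pi_2C.
  have [a T_pi] := two_C_plane_tline pi_2C.
  have join_pi : (m + tline a <= pi)%MS by rewrite addsmx_sub m_pi.
  have rk_cap : \rank (m :&: tline a) = 1%N.
    apply/eqP; rewrite eqn_leq rank_cap_tline_le1 /=.
    have := mxrank_sum_cap m (tline a); move: (mxrankS join_pi).
    by rewrite (subsp_rank pi_plane) (subsp_rank m_line) rank_tline; lia.
  have a_meets : a \in tangents_meeting by rewrite inE rk_cap.
  exists a => //; apply: (subsp_eq_genmx pi_plane); apply/andP; split => //.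
  by apply: submx_rank_geq join_pi _; rewrite (subsp_rank pi_plane) rank_join_tline.
- case=> a a_meets ->; rewrite /join_plane genmxE addsmxSl andbT.
  apply: (@tline_plane_two_C _ _ a); first exact/genmx_subsp/rank_join_tline.
    by rewrite genmxE addsmxSr.
  by apply: contra (m_noG a); apply: submx_trans; rewrite genmxE addsmxSl.
Qed.

Lemma P_T_eq_Pi_2C : P_T m = Pi_2C m.
Proof.
rewrite /P_T /Pi_2C T_points_on_line two_C_planes_through_line.
by rewrite !card_in_imset //; [exact: join_plane_inj | exact: meet_point_inj].
Qed.

End TangentsMeetingLine.

Section CharacteristicThree.
Variable F : finFieldType.
Implicit Types (u a : option F) (X : 'M[F]_4).

Lemma char3_card_mod3 : (#|F| %% 3 == 0)%N -> (3%:R : F) = 0.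
Proof.
move=> q3; have [p p_pr p_char] := finPcharP F.
have : (3 %| p ^ logn p #|pPrimeCharType p_char|)%N.
  by rewrite -(card_pprimeChar p_char) /dvdn.
rewrite Euclid_dvdX // dvdn_prime2 // => /andP[/eqP p3 _].
by rewrite p3 (pcharf0 p_char).
Qed.

Hypothesis char3 : (3%:R : F) = 0.

Lemma cube_surj (z : F) : exists s, s ^+ 3 = z.
Proof.
have cube_inj : injective (fun x : F => x ^+ 3).
  move=> x y /= xy3; apply/eqP; rewrite -subr_eq0.
  suff : (x - y) ^+ 3 == 0 by rewrite expf_eq0.
  rewrite (_ : (x - y) ^+ 3 = x ^+ 3 - y ^+ 3 - 3%:R * (x * y * (x - y))); last by ring.
  by rewrite xy3 char3 mul0r subrr subr0.
have [g _ gK] := injF_bij cube_inj.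
by exists (g z); rewrite gK.
Qed.

Lemma tanv_sub_osc a u : (tanv a <= osc u)%MS.
Proof.
rewrite /osc sub_kermx_vdot oscvT; case: a u => [s|] [t|]; rewrite !vdot_cubicE //.
- apply/eqP; transitivity (3%:R * (s - t) ^+ 2 : F); first by ring.
  by rewrite char3 mul0r.
- by apply/eqP; ring.
- by rewrite char3 mul0r oppr0.
Qed.

Lemma Pt_sub_osc a u : (Pt a <= osc u)%MS = (a == u).
Proof.
rewrite /osc sub_kermx_vdot oscvT; case: a u => [s|] [t|]; rewrite !vdot_cubicE //=.
- rewrite (_ : _ - _ = (s - t) ^+ 3); last by ring.
  by rewrite expf_eq0 subr_eq0.
- by rewrite (_ : _ + _ = 1) ?oner_eq0 //; ring.
- by rewrite oner_eq0.
- by rewrite !eqxx.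
Qed.

Lemma rV_sub_osc (y : 'rV[F]_4) : exists u, (y <= osc u)%MS.
Proof.
rewrite [y]rV4E; move: (y 0 i0) (y 0 i1) (y 0 i2) (y 0 i3) => y0 y1 y2 y3.
have [y30|nz_y3] := eqVneq y3 0.
  by exists None; rewrite /osc sub_kermx_vdot oscvT vdotE y30; apply/eqP; ring.
have [s s3] := cube_surj (y0 / y3).
exists (Some s); rewrite /osc sub_kermx_vdot oscvT vdotE.
rewrite (_ : _ + _ = y0 - s ^+ 3 * y3 + 3%:R * (s ^+ 2 * y2 - s * y1)); last by ring.
by rewrite s3 char3 mul0r addr0 divfK // subrr.
Qed.

Variable m : 'M[F]_4.
Hypothesis m_line : m \in lines F.
Hypothesis m_noG : forall u, ~~ (m <= osc u)%MS.

Lemma tanv_notin_line a : ~~ (tanv a <= m)%MS.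
Proof.
apply/negP => Tm; have rk_m := subsp_rank m_line.
have [i yi] : exists i, ~~ (row i m <= tanv a)%MS.
  by apply/row_subPn/negP => /mxrankS; rewrite rk_m rank_rV tanv_neq0.
have m_eq : (m <= tanv a + row i m)%MS.
  apply: submx_rank_geq; first by rewrite addsmx_sub Tm row_sub.
  by rewrite rk_m (mxrank_adds_rV (tanv_neq0 a) yi).
have [u yu] := rV_sub_osc (row i m).
by move: (m_noG u); rewrite (submx_trans m_eq) // addsmx_sub tanv_sub_osc.
Qed.

Lemma osc_through_line_point X a : X \in pts F -> (X <= m)%MS -> (X <= tline a)%MS ->
  forall u, (X <= osc u)%MS = (u == a).
Proof.
move=> X_pt Xm Xa u; have rk_X := subsp_rank X_pt.
pose x := nz_row X.
have xX : (x :=: X)%MS.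
  apply/eqmxP/andP; split; first exact: nz_row_sub.
  apply: submx_rank_geq (nz_row_sub X) _.
  by rewrite rk_X rank_rV nz_row_eq0 -mxrank_eq0 rk_X.
have [al [be x_E]] : exists al be, x = al *: Pt a + be *: tanv a.
  by apply: sub_tlineP; rewrite xX.
have nz_al : al != 0.
  apply: contraNneq (tanv_notin_line a) => al0.
  apply: submx_trans Xm; rewrite -xX x_E al0 scale0r add0r.
  have : x != 0 by rewrite nz_row_eq0 -mxrank_eq0 rk_X.
  by rewrite x_E al0 scale0r add0r scaler_eq0 negb_or => /andP[nz_be _]; rewrite eqmx_scale.
rewrite -xX x_E /osc sub_kermx_vdot vdotDl !vdotZl.
move: (tanv_sub_osc a u) (Pt_sub_osc a u); rewrite /osc !sub_kermx_vdot => /eqP-> Pa_osc.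
by rewrite mulr0 addr0 mulf_eq0 (negPf nz_al) /= Pa_osc eq_sym.
Qed.

Lemma TO_point_T_point X : (X <= m)%MS -> TO_point X = T_point X.
Proof.
move=> Xm; apply/and4P/and3P => [[-> -> ->]//|[X_pt XnC X_tan]]; split=> //.
case/existsP: X_tan => a Xa.
apply/cards1P; exists <<osc a>>%MS; apply/setP => pi; rewrite in_set1 in_set.
apply/idP/eqP => [/and3P[pi_plane /existsP[u pi_u] X_pi]|->].
  rewrite (subsp_eq_genmx pi_plane pi_u); move: X_pi.
  by rewrite (eqmxP pi_u) (osc_through_line_point X_pt Xm Xa) => /eqP->.
rewrite genmx_subsp ?rank_osc // genmxE (osc_through_line_point X_pt Xm Xa) eqxx andbT.
by apply/existsP; exists a; apply/eqmxP; exact: genmxE.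
Qed.

Lemma P_TO_eq_P_T : P_TO m = P_T m.
Proof.
rewrite /P_TO /P_T; congr #|pred_of_set _|; apply/setP => X; rewrite !inE.
by case Xm : (X <= m)%MS; rewrite ?andbF ?andbT ?TO_point_T_point.
Qed.

End CharacteristicThree.

Section CubicPreservingProjectivities.
Variable F : finFieldType.
Implicit Types (s r t : F) (u v a b : option F) (M : 'M[F]_4).

Definition cubpt s r : 'rV[F]_4 := mkv (s ^+ 3) (s ^+ 2 * r) (s * r ^+ 2) (r ^+ 3).
Definition oscw s r : 'cV[F]_4 :=
  mkc (r ^+ 3) (- (3%:R * s * r ^+ 2)) (3%:R * s ^+ 2 * r) (- s ^+ 3).

Definition hom_s u : F := if u is Some t then t else 1.
Definition hom_r u : F := if u is Some t then 1 else 0.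

Lemma Pt_cubpt u : Pt u = cubpt (hom_s u) (hom_r u).
Proof. by case: u => [t|] /=; congr mkv; ring. Qed.

Lemma oscvT_oscw u : (oscv u)^T = (if u is Some _ then 1 else -1) *: oscw (hom_s u) (hom_r u).
Proof. by rewrite oscvT scale_mkc; case: u => [t|] /=; congr mkc; ring. Qed.

Lemma oscw_oscvT s r : exists u rho, oscw s r = rho *: (oscv u)^T.
Proof.
have [r0|nz_r] := eqVneq r 0.
  by exists None, (- s ^+ 3); rewrite oscvT scale_mkc r0; congr mkc; ring.
by exists (Some (s / r)), (r ^+ 3); rewrite oscvT scale_mkc; congr mkc; field.
Qed.

Lemma hom_det_neq0 a b : a != b -> hom_s a * hom_r b - hom_r a * hom_s b != 0.
Proof.
case: a b => [s|] [t|] //= ab; rewrite ?mulr1 ?mul1r ?mulr0 ?mul0r ?subr0 ?sub0r.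
- by rewrite subr_eq0; apply: contraNneq ab => ->.
- by rewrite oppr_eq0 oner_eq0.
- by rewrite oner_eq0.
Qed.

(* The matrix of the projectivity induced on C by [(s : r) |-> (al s + be r : ga s + de r)]. *)
Definition sym3mx al be ga de : 'M[F]_4 :=
  \matrix_(i < 4, j < 4) nth 0 (nth [::]
   [:: [:: al ^+ 3; al ^+ 2 * ga; al * ga ^+ 2; ga ^+ 3];
       [:: 3%:R * al ^+ 2 * be; al ^+ 2 * de + 2%:R * al * be * ga;
           be * ga ^+ 2 + 2%:R * al * ga * de; 3%:R * ga ^+ 2 * de];
       [:: 3%:R * al * be ^+ 2; 2%:R * al * be * de + be ^+ 2 * ga;
           al * de ^+ 2 + 2%:R * be * ga * de; 3%:R * ga * de ^+ 2];
       [:: be ^+ 3; be ^+ 2 * de; be * de ^+ 2; de ^+ 3]] i) j.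

Lemma cubpt_sym3mx al be ga de s r :
  cubpt s r *m sym3mx al be ga de = cubpt (al * s + be * r) (ga * s + de * r).
Proof. by rewrite mulmx_mkv !mxE /=; congr mkv; ring. Qed.

Lemma sym3mx_oscw al be ga de s r :
  sym3mx al be ga de *m oscw s r = oscw (s * de - r * be) (r * al - s * ga).
Proof. by rewrite mulmx_mkc !mxE /=; congr mkc; ring. Qed.

Lemma sym3mx_adj al be ga de :
  sym3mx de (- be) (- ga) al *m sym3mx al be ga de = ((al * de - be * ga) ^+ 3) *: 1%:M.
Proof.
apply/matrixP => i j; rewrite !mxE sum4 !mxE /=.
by move: i j; apply: ord4P; apply: ord4P; rewrite /= ?mulr1n ?mulr0n; ring.
Qed.

Lemma cubpt_quadrics k s r (y := k *: cubpt s r) :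
  y 0 i0 * y 0 i2 - y 0 i1 ^+ 2 = 0 /\ y 0 i1 * y 0 i3 - y 0 i2 ^+ 2 = 0.
Proof. by rewrite /y scale_mkv !mxE /=; split; ring. Qed.

Lemma cubic_coefs_eq0 (c0 c1 c2 c3 : F) : (5 <= #|F|)%N ->
  (forall t, t != 0 -> c3 * t ^+ 3 + c2 * t ^+ 2 + c1 * t + c0 = 0) ->
  [/\ c0 = 0, c1 = 0, c2 = 0 & c3 = 0].
Proof.
move=> hq vanish; pose p := Poly [:: c0; c1; c2; c3].
suff p0 : p = 0.
  have c i : [:: c0; c1; c2; c3]`_i = 0 by rewrite -coef_Poly -/p p0 coef0.
  by split; [exact: (c 0%N) | exact: (c 1%N) | exact: (c 2%N) | exact: (c 3%N)].
apply/eqP; apply/negPn/negP => nz_p.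
have := max_poly_roots nz_p (rs := enum (predC1 (0 : F))).
rewrite enum_uniq -cardE cardC1.
have -> : all (root p) (enum (predC1 (0 : F))).
  apply/allP => x; rewrite mem_enum => nz_x; rewrite rootE horner_Poly /=; apply/eqP.
  by rewrite -[RHS](vanish x nz_x); ring.
move=> /(_ isT isT) /leq_trans /(_ (size_Poly [:: c0; c1; c2; c3])) small_F.
have : (#|F|.-1 < 4)%N := small_F.
by move: hq; rewrite -subn1; lia.
Qed.

Definition maps_osc M := forall s r, exists s' r' k, M *m oscw s r = k *: oscw s' r'.

Lemma maps_osc_sym3mx al be ga de : maps_osc (sym3mx al be ga de).
Proof. by move=> s r; do 2 eexists; exists 1; rewrite sym3mx_oscw scale1r. Qed.

Lemma maps_oscM M N : maps_osc M -> maps_osc N -> maps_osc (M *m N).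
Proof.
move=> mapsM mapsN s r; have [s1 [r1 [k1 E1]]] := mapsN s r.
have [s2 [r2 [k2 E2]]] := mapsM s1 r1.
by exists s2, r2, (k1 * k2); rewrite -mulmxA E1 -scalemxAr E2 scalerA.
Qed.

Lemma maps_oscZ c M : maps_osc M -> maps_osc (c *: M).
Proof.
move=> mapsM s r; have [s' [r' [k E]]] := mapsM s r.
by exists s', r', (c * k); rewrite -scalemxAl E scalerA.
Qed.

Lemma maps_osc_oscvT M : M \in unitmx -> maps_osc M ->
  forall v, exists u k, k != 0 /\ M *m (oscv v)^T = k *: (oscv u)^T.
Proof.
move=> Mu mapsM v; have [s' [r' [k E]]] := mapsM (hom_s v) (hom_r v).
have [u [rho E']] := oscw_oscvT s' r'.
have [c MvE] : exists c, M *m (oscv v)^T = c *: (oscv u)^T.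
  by eexists; rewrite oscvT_oscw -scalemxAr E E' !scalerA.
exists u, c; split => //; apply: contraNneq (oscvT_neq0 v) => c0.
by rewrite -[_^T](mulKmx Mu) MvE c0 scale0r mulmx0.
Qed.

Lemma mulmx_PtN M : Pt None *m M = mkv (M i0 i0) (M i0 i1) (M i0 i2) (M i0 i3).
Proof. by rewrite mulmx_mkv; congr mkv; ring. Qed.

Lemma mulmx_Pt0 M : Pt (Some 0) *m M = mkv (M i3 i0) (M i3 i1) (M i3 i2) (M i3 i3).
Proof. by rewrite mulmx_mkv; congr mkv; ring. Qed.

Lemma maps_osc_diag lam : maps_osc (diag_mx (mkv 1 lam (lam ^+ 2) (lam ^+ 3))).
Proof.
move=> s r; exists (lam * s), r, 1; rewrite scale1r mulmx_mkc !mxE /=.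
by congr mkc; ring.
Qed.

(* The image of [P(t)] lies on the quadrics [x0 x2 = x1^2] and [x1 x3 = x2^2] through C. *)
Lemma fixing_ends_quadrics M al de :
  Pt None *m M = al *: Pt None -> Pt (Some 0) *m M = de *: Pt (Some 0) ->
  (forall t, t != 0 -> exists s r k, Pt (Some t) *m M = k *: cubpt s r) ->
  forall t, t != 0 -> [/\
    (al * M i1 i2) * t ^+ 3 + (al * M i2 i2 + M i1 i0 * M i1 i2 - M i1 i1 ^+ 2) * t ^+ 2
    + (M i1 i0 * M i2 i2 + M i2 i0 * M i1 i2 - 2%:R * M i1 i1 * M i2 i1) * t
    + (M i2 i0 * M i2 i2 - M i2 i1 ^+ 2) = 0 &
    (M i1 i1 * M i1 i3 - M i1 i2 ^+ 2) * t ^+ 3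
    + (M i1 i1 * M i2 i3 + M i2 i1 * M i1 i3 - 2%:R * M i1 i2 * M i2 i2) * t ^+ 2
    + (M i1 i1 * de + M i2 i1 * M i2 i3 - M i2 i2 ^+ 2) * t + M i2 i1 * de = 0].
Proof.
rewrite mulmx_PtN mulmx_Pt0 /Pt !scale_mkv !expr0n /= !mulr0 !mulr1.
move=> /mkv_inj[M00 M01 M02 M03] /mkv_inj[M30 M31 M32 M33] onC t nz_t.
have [s [r [k E]]] := onC t nz_t.
have [] := cubpt_quadrics k s r; rewrite -E mulmx_mkv !mxE /= => q1 q2; split.
- apply: (mulfI (expf_neq0 2 nz_t)); rewrite mulr0 -q1.
  by rewrite M00 M01 M02 M30 M31 M32; ring.
- apply: (mulfI nz_t); rewrite mulr0 -q2.
  by rewrite M01 M02 M03 M31 M32 M33; ring.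
Qed.

(* The two cubics of [fixing_ends_quadrics] vanish on [F^*], hence identically. *)
Lemma fixing_ends_diag M al de : (5 <= #|F|)%N -> M \in unitmx -> al != 0 -> de != 0 ->
  Pt None *m M = al *: Pt None -> Pt (Some 0) *m M = de *: Pt (Some 0) ->
  (forall t, t != 0 -> exists s r k, Pt (Some t) *m M = k *: cubpt s r) ->
  exists lam, M = al *: diag_mx (mkv 1 lam (lam ^+ 2) (lam ^+ 3)).
Proof.
move=> hq Mu nz_al nz_de ME0 ME3 onC; have quadrics := fixing_ends_quadrics ME0 ME3 onC.
have [d0 d1 d2 d3] := cubic_coefs_eq0 hq (fun t nz_t => (quadrics t nz_t).1).
have [c0 c1 c2 c3] := cubic_coefs_eq0 hq (fun t nz_t => (quadrics t nz_t).2).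
move: ME0 ME3; rewrite mulmx_PtN mulmx_Pt0 /Pt !scale_mkv !expr0n /= !mulr0 !mulr1.
move=> /mkv_inj[M00 M01 M02 M03] /mkv_inj[M30 M31 M32 M33].
have M21 : M i2 i1 = 0 by move/eqP: c0; rewrite mulf_eq0 (negPf nz_de) orbF => /eqP.
have M12 : M i1 i2 = 0 by apply: (mulfI nz_al); rewrite mulr0.
have nz_M11 : M i1 i1 != 0.
  apply/eqP => M11; have : M *m mkc 0 1 0 0 = 0.
    by rewrite mulmx_mkc M01 M11 M21 M31 -mkc0; congr mkc; ring.
  move/(congr1 (mulmx (invmx M))); rewrite mulKmx // mulmx0 => /eqP.
  by rewrite mkc_eq0 oner_eq0 andbF.
have M13 : M i1 i3 = 0 by apply: (mulfI nz_M11); rewrite mulr0 -[RHS]c3 M12; ring.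
have M23 : M i2 i3 = 0 by apply: (mulfI nz_M11); rewrite mulr0 -[RHS]c2 M12 M21; ring.
have M22 : M i2 i2 = M i1 i1 ^+ 2 / al.
  by apply/(canRL (mulfK nz_al)); rewrite mulrC -[LHS]subr0 -d2 M12; ring.
have nz_M22 : M i2 i2 != 0 by rewrite M22 mulf_neq0 ?invr_eq0 // expf_neq0.
have M10 : M i1 i0 = 0.
  by apply: (mulfI nz_M22); rewrite mulr0 mulrC -[RHS]d1 M12 M21; ring.
have M20 : M i2 i0 = 0 by apply: (mulfI nz_M22); rewrite mulr0 mulrC -[RHS]d0 M21; ring.
have deE : de = M i2 i2 ^+ 2 / M i1 i1.
  by apply/(canRL (mulfK nz_M11)); rewrite mulrC -[LHS]subr0 -c1 M21; ring.
exists (M i1 i1 / al); apply/matrixP; apply: ord4P; apply: ord4P; rewrite !mxE /=.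
all: rewrite ?M00 ?M01 ?M02 ?M03 ?M10 ?M12 ?M13 ?M20 ?M21 ?M23 ?M30 ?M31 ?M32 ?M33 ?deE ?M22.
all: by field; rewrite ?nz_al ?nz_M11.
Qed.

Lemma Gq_Pt M : M \in Gq F -> forall u, exists v k, k != 0 /\ Pt u *m M = k *: Pt v.
Proof.
rewrite inE => /andP[Mu /eqP GC] u.
have : <<(<<Pt u>>%MS *m M)>>%MS \in Cpts F by rewrite -GC; apply: imset_f; exact: imset_f.
case/imsetP => v _ /genmx_inj_sub Mu_v.
have /sub_rVP[k Ek] : (Pt u *m M <= Pt v)%MS.
  by apply: submx_trans Mu_v; apply: submxMr; rewrite genmxE.
exists v, k; split => //; apply: contraNneq (Pt_neq0 u) => k0.
by rewrite -[Pt u](mulmxK Mu) Ek k0 scale0r mul0mx.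
Qed.

Lemma Gq_Pt_preimage M : M \in Gq F -> forall u, exists v, (Pt u <= Pt v *m M)%MS.
Proof.
rewrite inE => /andP[_ /eqP GC] u.
have : <<Pt u>>%MS \in [set <<P *m M>>%MS | P in Cpts F] by rewrite GC; exact: imset_f.
case/imsetP => P /imsetP[v _ ->] /genmx_inj_sub Pu_v; exists v.
by apply: submx_trans Pu_v _; apply: submxMr; rewrite genmxE.
Qed.

(* Composing with a [sym3mx] reduces to a projectivity fixing [P(oo)] and [P(0)]. *)
Lemma Gq_maps_osc M : (5 <= #|F|)%N -> M \in Gq F -> maps_osc M.
Proof.
move=> hq GqM; have Mu : M \in unitmx by move: GqM; rewrite inE => /andP[].
have [a [ka [nz_ka Ea]]] := Gq_Pt GqM None.
have [b [kb [nz_kb Eb]]] := Gq_Pt GqM (Some 0).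
have ab : a != b.
  apply: contraNneq (Pt_neq0 (@None F)) => eab; apply/eqP.
  have : (Pt None *m M <= Pt (Some 0) *m M)%MS.
    by rewrite Ea Eb eab scalemx_sub // eqmx_scale.
  by rewrite submxMfree ?row_free_unit // => /Pt_inj.
pose a1 := hom_s a; pose a2 := hom_r a; pose b1 := hom_s b; pose b2 := hom_r b.
pose D := a1 * b2 - a2 * b1; have nz_D3 : D ^+ 3 != 0 by rewrite expf_neq0 ?hom_det_neq0.
pose N := sym3mx b2 (- b1) (- a2) a1; pose N' := sym3mx a1 b1 a2 b2.
have NN' : N *m N' = D ^+ 3 *: 1%:M.
  by rewrite sym3mx_adj; congr (_ ^+ 3 *: _); rewrite /D; ring.
have Nu : N \in unitmx.
  have : N *m ((D ^+ 3)^-1 *: N') = 1%:M.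
    by rewrite -scalemxAr NN' scalerA mulVf ?scale1r.
  by case/mulmx1_unit.
have -> : M = (D ^+ 3)^-1 *: (M *m N *m N').
  by rewrite -mulmxA NN' -scalemxAr mulmx1 scalerA mulVf ?scale1r.
apply/maps_oscZ/maps_oscM/maps_osc_sym3mx.
suff [lam ->] : exists lam, M *m N = ka * D ^+ 3 *: diag_mx (mkv 1 lam (lam ^+ 2) (lam ^+ 3)).
  exact/maps_oscZ/maps_osc_diag.
apply: (fixing_ends_diag (de := kb * D ^+ 3) hq).
- by rewrite unitmx_mul Mu Nu.
- by rewrite mulf_neq0.
- by rewrite mulf_neq0.
- rewrite mulmxA Ea -scalemxAl Pt_cubpt cubpt_sym3mx /= -scalerA.
  by congr (_ *: _); rewrite /Pt scale_mkv; congr mkv; rewrite /D /a1 /a2 /b1 /b2; ring.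
- rewrite mulmxA Eb -scalemxAl Pt_cubpt cubpt_sym3mx /= -scalerA.
  by congr (_ *: _); rewrite /Pt scale_mkv; congr mkv; rewrite /D /a1 /a2 /b1 /b2; ring.
- move=> t _; have [v [k [_ Et]]] := Gq_Pt GqM (Some t).
  by do 2 eexists; exists k; rewrite mulmxA Et -scalemxAl Pt_cubpt cubpt_sym3mx.
Qed.

Lemma Gq_oscvT M : (5 <= #|F|)%N -> M \in Gq F ->
  forall v, exists u k, k != 0 /\ M *m (oscv v)^T = k *: (oscv u)^T.
Proof.
move=> hq GqM; apply: maps_osc_oscvT (Gq_maps_osc hq GqM).
by move: GqM; rewrite inE => /andP[].
Qed.

End CubicPreservingProjectivities.

Section Orbits.
Variable F : finFieldType.
Implicit Types (u : option F) (l m pi P M : 'M[F]_4).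

Lemma EnG_line_props (L : finFieldType) (iota : {rmorphism F -> L}) l : EnG_line iota l ->
  [/\ l \in lines F, forall u, ~~ (Pt u <= l)%MS & forall u, ~~ (l <= osc u)%MS].
Proof.
case/and5P=> l_line /forallP l_noC /forallP l_noG _ _; split => // u.
  have Cu : <<Pt u>>%MS \in Cpts F by exact: imset_f.
  by move: (l_noC <<Pt u>>%MS); rewrite Cu /= genmxE.
have osc_plane : <<osc u>>%MS \in planes F by apply: genmx_subsp; exact: rank_osc.
have osc_G : Gplane <<osc u>>%MS by apply/existsP; exists u; apply/eqmxP; exact: genmxE.
by move: (l_noG <<osc u>>%MS); rewrite osc_plane osc_G /= genmxE.
Qed.

Lemma Gq_line l M : M \in Gq F -> l \in lines F -> <<l *m M>>%MS \in lines F.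
Proof.
rewrite inE => /andP[Mu _] /subsp_rank rk_l; apply: genmx_subsp.
by rewrite mxrankMfree ?row_free_unit.
Qed.

Lemma Gq_noC l M : M \in Gq F ->
  (forall u, ~~ (Pt u <= l)%MS) -> forall u, ~~ (Pt u <= <<l *m M>>%MS)%MS.
Proof.
move=> GqM l_noC u; rewrite genmxE; apply/negP => Pu_lM.
have Mu : M \in unitmx by move: GqM; rewrite inE => /andP[].
have [v Pu_Pv] := Gq_Pt_preimage GqM u.
have : (Pt v *m M <= l *m M)%MS.
  apply: submx_trans Pu_lM; apply: submx_rank_geq Pu_Pv _.
  by rewrite mxrankMfree ?row_free_unit // !rank_rV !Pt_neq0.
by rewrite submxMfree ?row_free_unit // (negPf (l_noC v)).
Qed.

Lemma Gq_noG l M : (5 <= #|F|)%N -> M \in Gq F ->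
  (forall u, ~~ (l <= osc u)%MS) -> forall u, ~~ (<<l *m M>>%MS <= osc u)%MS.
Proof.
move=> hq GqM l_noG u; rewrite genmxE /osc sub_kermx -mulmxA.
have [w [k [nz_k Ek]]] := Gq_oscvT hq GqM u.
by rewrite Ek -scalemxAr scaler_eq0 (negPf nz_k) -sub_kermx (negPf (l_noG w)).
Qed.

Lemma Pi_Gamma_eq0 m : (forall u, ~~ (m <= osc u)%MS) -> Pi_Gamma m = 0%N.
Proof.
move=> m_noG; apply/eqP; rewrite cards_eq0; apply/eqP/setP => pi; rewrite !inE.
apply/negbTE/and3P => -[_ /existsP[u /eqmxP pi_u] m_pi].
by move: (m_noG u); rewrite -pi_u m_pi.
Qed.

Lemma Lambda_Gamma_eq0 (O : {set 'M[F]_4}) pi :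
  {in O, forall m u, ~~ (m <= osc u)%MS} -> Gplane pi -> Lambda_Gamma O pi = 0%N.
Proof.
move=> O_noG /existsP[u /eqmxP pi_u]; apply/eqP; rewrite cards_eq0; apply/eqP/setP => m.
by rewrite !inE; apply/negbTE/andP => -[/O_noG m_noG]; rewrite pi_u (negPf (m_noG u)).
Qed.

Lemma P_C_eq0 m : (forall u, ~~ (Pt u <= m)%MS) -> P_C m = 0%N.
Proof.
move=> m_noC; rewrite /P_C card_Cpts_sub; apply/eqP; rewrite cards_eq0; apply/eqP/setP => u.
by rewrite !inE (negPf (m_noC u)).
Qed.

Lemma L_C_eq0 (O : {set 'M[F]_4}) P :
  {in O, forall m u, ~~ (Pt u <= m)%MS} -> P \in Cpts F -> L_C O P = 0%N.
Proof.
move=> O_noC /imsetP[u _ ->]; apply/eqP; rewrite cards_eq0; apply/eqP/setP => m.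
by rewrite !inE genmxE; apply/negbTE/andP => -[/O_noC/(_ u)/negPf->].
Qed.

End Orbits.

Unset Implicit Arguments. Set Strict Implicit.

Theorem proposition3p4 (F L : finFieldType) (iota : {rmorphism F -> L})
  (hL : #|L| = (#|F| ^ 2)%N) (hq : (5 <= #|F|)%N)
  (l : 'M[F]_4) (hl : EnG_line iota l) :
  let O := orbit_line l in
  [/\ (forall m, m \in O -> Pi_Gamma m = 0%N),
      (forall pi, pi \in planes F -> Gplane pi -> Lambda_Gamma O pi = 0%N),
      ((forall m, m \in O -> P_C m = 0%N) /\
       (forall P, P \in Cpts F -> L_C O P = 0%N)),
      ((#|F| %% 3 != 0)%N -> forall m, m \in O -> P_T m = Pi_2C m)
    & ((#|F| %% 3 == 0)%N -> forall m, m \in O -> P_TO m = Pi_2C m)].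
Proof.
move=> O; have [l_line l_noC l_noG] := EnG_line_props hl.
have orbit_props m : m \in O ->
    [/\ m \in lines F, forall u, ~~ (Pt u <= m)%MS & forall u, ~~ (m <= osc u)%MS].
  case/imsetP=> M GqM ->; split; first exact: Gq_line.
    exact: Gq_noC.
  exact: Gq_noG.
split.
- by move=> m /orbit_props[_ _ m_noG]; exact: Pi_Gamma_eq0.
- by move=> pi _; apply: Lambda_Gamma_eq0 => m /orbit_props[_ _ m_noG].
- split; first by move=> m /orbit_props[_ m_noC _]; exact: P_C_eq0.
  by move=> P; apply: L_C_eq0 => m /orbit_props[_ m_noC _].
- by move=> _ m /orbit_props[m_line m_noC m_noG]; exact: P_T_eq_Pi_2C.
- move=> q3 m /orbit_props[m_line m_noC m_noG].
  by rewrite (P_TO_eq_P_T (char3_card_mod3 q3) m_line m_noG); exact: P_T_eq_Pi_2C.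
Qed.
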